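(* Let $k \geq 1$ be an integer and let $M$ be a positive real number. Then there exists an integer $d$ such that, for each $i = 1, \ldots, k$, $K_i := \mathbb{Q}(\sqrt{d+i})$ is a real quadratic field with $|Po(K_i)| > M$; and there also exists an integer $d'$ such that, for each $i = 1, \ldots, k$, $K_i' := \mathbb{Q}(\sqrt{d'+i})$ is an imaginary quadratic field with $|Po(K_i')| > M$.
   Context: For a number field $K$ with ring of integers $\mathcal{O}_K$ and ideal class group $Cl_K$, and for each prime power $q$, let $\Pi_q(K)$ be the product of all prime ideals $\mathfrak{p}$ of $\mathcal{O}_K$ with absolute norm $N_{K/\mathbb{Q}}\mathfrak{p} = q$ (and $\Pi_q(K) = \mathcal{O}_K$ if there are no such primes). The Pólya group $Po(K)$ is the subgroup of $Cl_K$ generated by the classes $[\Pi_q(K)]$ over all prime powers $q$. *)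

From mathcomp Require Import all_boot all_order all_algebra all_field.
From mathcomp Require Import reals.
Set Implicit Arguments. Unset Strict Implicit. Unset Printing Implicit Defensive.
Import Order.TTheory GRing.Theory Num.Theory.
Local Open Scope ring_scope.

Definition aset := algC -> Prop.

Definition Kfield (m : int) : aset :=
  fun x => exists a b : rat, x = ratr a + ratr b * sqrtC (m%:~R).

Definition OK (m : int) : aset := fun x => Kfield m x /\ x \in Aint.

Definition ideq (I J : aset) : Prop := forall x, I x <-> J x.

Definition is_ideal (m : int) (I : aset) : Prop :=
  [/\ forall x, I x -> OK m x, I 0,
      forall x y, I x -> I y -> I (x + y) &
      forall r x, OK m r -> I x -> I (r * x)].

Definition nonzero_ideal (m : int) (I : aset) : Prop :=
  is_ideal m I /\ exists x, I x /\ x != 0.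

Definition prodI (I J : aset) : aset :=
  fun x => exists n (a b : 'I_n -> algC),
    (forall i, I (a i) /\ J (b i)) /\ x = \sum_(i < n) a i * b i.

Definition prodL (m : int) (s : seq aset) : aset := foldr prodI (OK m) s.

Definition is_prime_ideal (m : int) (P : aset) : Prop :=
  [/\ nonzero_ideal m P, (exists x, OK m x /\ ~ P x) &
      forall x y, OK m x -> OK m y -> P (x * y) -> P x \/ P y].

(* absolute norm N(P) = #(O_K / P) = q *)
Definition has_norm (m : int) (P : aset) (q : nat) : Prop :=
  exists r : seq algC, [/\ size r = q, (forall y, y \in r -> OK m y),
    (forall x, OK m x -> exists2 y, y \in r & P (x - y)) &
    (forall i j, (i < q)%N -> (j < q)%N -> i <> j ->
        ~ P (nth 0 r i - nth 0 r j))].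

Definition prime_power (q : nat) : Prop :=
  exists p e, [/\ prime p, (0 < e)%N & q = (p ^ e)%N].

(* Pi = Pi_q(K): product of all (distinct) prime ideals of norm q *)
Definition is_Pi (m : int) (q : nat) (Pi : aset) : Prop :=
  exists s : seq aset,
    [/\ forall P, (is_prime_ideal m P /\ has_norm m P q) <->
                  exists2 i, (i < size s)%N & ideq P (nth (OK m) s i),
        forall i, (i < size s)%N -> is_prime_ideal m (nth (OK m) s i)
                                     /\ has_norm m (nth (OK m) s i) q,
        forall i j, (i < size s)%N -> (j < size s)%N -> i <> j ->
                  ~ ideq (nth (OK m) s i) (nth (OK m) s j) &
        ideq Pi (prodL m s)].

Definition scaleI (a : algC) (I : aset) : aset :=
  fun x => exists2 y, I y & x = a * y.

Definition ideal_equiv (m : int) (I J : aset) : Prop :=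
  exists a b, [/\ OK m a, OK m b, a != 0, b != 0 & ideq (scaleI a I) (scaleI b J)].

(* the class of I lies in the subgroup generated by the classes [Pi_q]:
   [I] * [prod_B Pi] = [prod_A Pi] for finite families A, B of prime powers *)
Definition in_Polya (m : int) (I : aset) : Prop :=
  nonzero_ideal m I /\
  exists (qa qb : seq nat) (Pa Pb : seq aset),
    [/\ size Pa = size qa, size Pb = size qb,
        forall i, (i < size qa)%N ->
           prime_power (nth 0%N qa i) /\ is_Pi m (nth 0%N qa i) (nth (OK m) Pa i),
        forall i, (i < size qb)%N ->
           prime_power (nth 0%N qb i) /\ is_Pi m (nth 0%N qb i) (nth (OK m) Pb i) &
        ideal_equiv m (prodI I (prodL m Pb)) (prodL m Pa)].

(* |Po(Q(sqrt m))| > M : there are N > M pairwise distinct classes in Po *)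
Definition polya_gt (R : realType) (m : int) (M : R) : Prop :=
  exists s : seq aset,
    [/\ M < (size s)%:R,
        forall i, (i < size s)%N -> in_Polya m (nth (OK m) s i) &
        forall i j, (i < size s)%N -> (j < size s)%N -> i <> j ->
          ~ ideal_equiv m (nth (OK m) s i) (nth (OK m) s j)].

Definition not_square (m : int) : Prop := ~ exists n : int, m = n ^+ 2.

(* For an odd prime p exactly dividing m, the ideal
   J_p = {x in O_K | x sqrt m / p in O_K} of K = Q(sqrt m) is the unique prime
   of norm p, so J_p = Pi_p(K) and its class lies in Po(K).  If J_p and J_q are
   equivalent, then J_p J_q is principal with a generator of norm +-pq, and the
   norm form forces -+q (m / p) to be a square modulo p.  Hence primes
   p_1, ..., p_L exactly dividing m give L distinct classes in Po(K) as soon as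
   p_i (m / p_j) is a nonresidue modulo p_j = 1 (mod 4) for all i < j.  By
   pigeonhole on quadratic characters, any 2^L primes = 1 (mod 4) contain such
   a chain of L primes p_j, for suitable prescribed residues of m / p_j.  Doing
   this with fresh primes for each shift i = 1, ..., k and solving the
   congruences d + i = p_j (m / p_j) (mod p_j^2) by the Chinese remainder
   theorem yields an arithmetic progression of suitable d, which contains both
   positive and negative values. *)

From mathcomp Require Import all_boot all_order all_algebra all_field.
From mathcomp Require Import reals.
From mathcomp Require Import ring zify.
Import Order.TTheory GRing.Theory Num.Theory.
Set Implicit Arguments. Unset Strict Implicit. Unset Printing Implicit Defensive.
Local Open Scope ring_scope.

Lemma Aint_of_int_sum_mul (x y : algC) :
  x + y \is a Num.int -> x * y \is a Num.int -> x \in Aint.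
Proof.
move=> Zsum Zmul; pose q := ('X - x%:P) * ('X - y%:P).
have Dq : q = 'X^2 - (x + y)%:P * 'X + (x * y)%:P.
  by rewrite /q polyCD polyCM mulrBl !mulrBr -expr2 [_%:P * 'X]mulrC -polyCM; ring.
apply: (@root_monic_Aint q); first by rewrite rootM root_XsubC eqxx.
  by rewrite rpredM // monicXsubC.
rewrite Dq; apply/polyOverP => i.
rewrite coefD coefB coefXn coefCM coefX !coefC.
by case: i => [|[|[|i]]] /=; rewrite ?mulr0 ?mulr1 ?subr0 ?sub0r ?add0r ?addr0 ?rpredN.
Qed.

Definition quad_coords (m : int) (x A B : algC) :=
  [/\ A \in Crat, B \in Crat & x = A + B * sqrtC m%:~R].

Definition conj_pair (m : int) (x y : algC) :=
  exists A B, quad_coords m x A B /\ y = A - B * sqrtC m%:~R.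

Lemma sqrtC_int_mul_self (m : int) : sqrtC (m%:~R : algC) * sqrtC m%:~R = m%:~R.
Proof. by rewrite -expr2 sqrtCK. Qed.

Ltac set_sqrtC := match goal with |- context [sqrtC (?z%:~R)] =>
  let E := fresh "E" in let t := fresh "t" in
  pose proof (sqrtC_int_mul_self z) as E; set t := sqrtC z%:~R in E *; rewrite -?E end.
Ltac sqrt_ring := set_sqrtC; ring.
Ltac sqrt_field := set_sqrtC; field.

Section QuadraticField.

Variable m : int.
Local Notation s := (sqrtC (m%:~R : algC)).

Lemma sqrtC_int_Aint : s \in Aint.
Proof.
apply: (@root_monic_Aint ('X^2 - (m%:~R)%:P)).
- by rewrite /root !hornerE sqrtCK subrr.
- by rewrite monicXnsubC.
apply/polyOverP => i; rewrite coefB coefXn coefC.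
by case: i => [|[|[|i]]] /=; rewrite ?subr0 ?sub0r ?subrr // rpredN intr_int.
Qed.

Lemma quad_coordsC c : c \in Crat -> quad_coords m c c 0.
Proof. by move=> Qc; split; rewrite ?rpred0 // mul0r addr0. Qed.

Lemma quad_coordsD x y A B A' B' : quad_coords m x A B -> quad_coords m y A' B' ->
  quad_coords m (x + y) (A + A') (B + B').
Proof. by move=> [QA QB ->] [QA' QB' ->]; split; rewrite ?rpredD //; ring. Qed.

Lemma quad_coordsM x y A B A' B' : quad_coords m x A B -> quad_coords m y A' B' ->
  quad_coords m (x * y) (A * A' + m%:~R * B * B') (A * B' + A' * B).
Proof.
move=> [QA QB ->] [QA' QB' ->]; split; last by sqrt_ring.
  by rewrite rpredD ?rpredM ?rpred_int.
by rewrite rpredD ?rpredM.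
Qed.

Lemma quad_norm_mul (A B A' B' : algC) :
  (A * A' + m%:~R * B * B') ^+ 2 - m%:~R * (A * B' + A' * B) ^+ 2 =
  (A ^+ 2 - m%:~R * B ^+ 2) * (A' ^+ 2 - m%:~R * B' ^+ 2).
Proof. by ring. Qed.

Lemma conj_pairC c : c \in Crat -> conj_pair m c c.
Proof. by move=> Qc; exists c, 0; rewrite mul0r subr0; split => //; apply: quad_coordsC. Qed.

Lemma conj_pairD x y x' y' : conj_pair m x y -> conj_pair m x' y' ->
  conj_pair m (x + x') (y + y').
Proof.
move=> [A [B [Cx ->]]] [A' [B' [Cx' ->]]].
by exists (A + A'), (B + B'); split; [apply: quad_coordsD | ring].
Qed.

Lemma conj_pairM x y x' y' : conj_pair m x y -> conj_pair m x' y' ->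
  conj_pair m (x * x') (y * y').
Proof.
move=> [A [B [Cx ->]]] [A' [B' [Cx' ->]]].
exists (A * A' + m%:~R * B * B'), (A * B' + A' * B).
by split; [apply: quad_coordsM | sqrt_ring].
Qed.

Lemma conj_pair_horner (q : {poly rat}) x y : conj_pair m x y ->
  conj_pair m (map_poly ratr q).[x] (map_poly ratr q).[y].
Proof.
move=> Cxy; elim/poly_ind: q => [|q c IHq].
  by rewrite rmorph0 !horner0; apply: conj_pairC; rewrite rpred0.
rewrite rmorphD rmorphM /= map_polyX map_polyC /= !hornerE.
by apply: conj_pairD; [apply: conj_pairM | apply: conj_pairC; rewrite Crat_rat].
Qed.

Lemma Aint_of_int_trace_norm A B (X N : int) : A + A = X%:~R ->
  A ^+ 2 - m%:~R * B ^+ 2 = N%:~R -> A + B * s \in Aint.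
Proof.
move=> DX DN; apply: (@Aint_of_int_sum_mul _ (A - B * s)).
  have -> : A + B * s + (A - B * s) = A + A by ring.
  by rewrite DX intr_int.
have -> : (A + B * s) * (A - B * s) = A ^+ 2 - m%:~R * B ^+ 2 by sqrt_ring.
by rewrite DN intr_int.
Qed.

Hypothesis m_not_square : not_square m.

Lemma sqrtC_int_notCrat : s \notin Crat.
Proof.
apply/negP => Qs; have /intrP [z Dz] := Cint_rat_Aint Qs sqrtC_int_Aint.
by apply: m_not_square; exists z; apply: (@intr_inj algC); rewrite rmorphXn /= -Dz sqrtCK.
Qed.

Lemma quad_coords_inj A B A' B' : A \in Crat -> B \in Crat -> A' \in Crat ->
  B' \in Crat -> A + B * s = A' + B' * s -> A = A' /\ B = B'.
Proof.
move=> QA QB QA' QB' E; suff EB : B = B' by split=> //; move: E; rewrite EB => /addIr.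
apply/eqP; apply: contraT => neqB; case/negP: sqrtC_int_notCrat.
have -> : s = (A' - A) / (B - B').
  have -> : A' - A = (A' + B' * s) - (A + B * s) + (B - B') * s by ring.
  by rewrite -E subrr add0r [_ * s]mulrC mulfK ?subr_eq0.
by rewrite rpred_div ?rpredB.
Qed.

Lemma quad_norm_mul_Crat x y A B A' B' r : quad_coords m x A B -> quad_coords m y A' B' ->
  r \in Crat -> x * y = r ->
  (A ^+ 2 - m%:~R * B ^+ 2) * (A' ^+ 2 - m%:~R * B' ^+ 2) = r ^+ 2.
Proof.
move=> Cx Cy Qr Dxy; have [QA QB Dxy'] := quad_coordsM Cx Cy.
have E : (A * A' + m%:~R * B * B') + (A * B' + A' * B) * s = r + 0 * s.
  by rewrite -Dxy' Dxy mul0r addr0.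
have [EA EB] := quad_coords_inj QA QB Qr (rpred0 _) E.
by rewrite -quad_norm_mul EA EB expr0n mulr0 subr0.
Qed.

(* A - B sqrt m is a root of the rational minimal polynomial of A + B sqrt m. *)
Lemma quad_conj_Aint A B : A \in Crat -> B \in Crat -> A + B * s \in Aint ->
  A - B * s \in Aint.
Proof.
move=> QA QB ZAB; have [q [Dq _] _] := minCpolyP (A + B * s).
have [C [D [[QC QD /esym DC] DD]]] :
    conj_pair m (map_poly ratr q).[A + B * s] (map_poly ratr q).[A - B * s].
  by apply: conj_pair_horner; exists A, B.
have [C0 D0] : C = 0 /\ D = 0.
  apply: quad_coords_inj; rewrite ?rpred0 // mul0r addr0 DC -Dq.
  exact/eqP/root_minCpoly.
apply: (@root_monic_Aint (minCpoly (A + B * s))) => //; last exact: minCpoly_monic.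
by rewrite /root Dq DD C0 D0 mul0r subr0.
Qed.

Lemma quad_int_trace_norm A B : A \in Crat -> B \in Crat -> A + B * s \in Aint ->
  exists X N : int, A + A = X%:~R /\ A ^+ 2 - m%:~R * B ^+ 2 = N%:~R.
Proof.
move=> QA QB ZAB; have ZAB' := quad_conj_Aint QA QB ZAB.
have /intrP [X DX] : A + A \is a Num.int.
  apply: Cint_rat_Aint; first exact: rpredD.
  have <- : (A + B * s) + (A - B * s) = A + A by ring.
  exact: rpredD.
have /intrP [N DN] : A ^+ 2 - m%:~R * B ^+ 2 \is a Num.int.
  apply: Cint_rat_Aint; first by rewrite rpredB ?rpredM ?rpred_int ?rpredX.
  have <- : (A + B * s) * (A - B * s) = A ^+ 2 - m%:~R * B ^+ 2 by sqrt_ring.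
  exact: rpredM.
by exists X, N.
Qed.

End QuadraticField.

Lemma OK_quad_coords m x : OK m x -> exists A B, quad_coords m x A B.
Proof. by move=> [[a [b ->]] _]; exists (ratr a), (ratr b); split; rewrite ?Crat_rat. Qed.

Lemma OK_of_quad_coords m x A B : quad_coords m x A B -> x \in Aint -> OK m x.
Proof. by move=> [/CratP [a ->] /CratP [b ->] ->] Zx; split=> //; exists a, b. Qed.

Lemma OKD m x y : OK m x -> OK m y -> OK m (x + y).
Proof.
move=> Ox Oy; have [A [B Cx]] := OK_quad_coords Ox; have [A' [B' Cy]] := OK_quad_coords Oy.
by apply: OK_of_quad_coords (quad_coordsD Cx Cy) _; rewrite rpredD //; [case: Ox | case: Oy].
Qed.

Lemma OKM m x y : OK m x -> OK m y -> OK m (x * y).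
Proof.
move=> Ox Oy; have [A [B Cx]] := OK_quad_coords Ox; have [A' [B' Cy]] := OK_quad_coords Oy.
by apply: OK_of_quad_coords (quad_coordsM Cx Cy) _; rewrite rpredM //; [case: Ox | case: Oy].
Qed.

Lemma OK_int m (z : int) : OK m z%:~R.
Proof. by apply: OK_of_quad_coords (quad_coordsC _ _) _; rewrite ?rpred_int ?Aint_int. Qed.

Lemma OK_nat m n : OK m n%:R.
Proof. by rewrite pmulrn; apply: OK_int. Qed.

Lemma OK1 m : OK m 1.
Proof. exact: (OK_nat m 1). Qed.

Lemma OKN m x : OK m x -> OK m (- x).
Proof. by move=> Ox; rewrite -mulN1r; apply: OKM => //; apply: (OK_int m (-1)). Qed.

Lemma OK_sqrtC m : OK m (sqrtC m%:~R).
Proof.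
apply: (@OK_of_quad_coords _ _ 0 1); last exact: sqrtC_int_Aint.
by split; rewrite ?rpred0 ?rpred1 // add0r mul1r.
Qed.

Lemma OK_mul_conj m x A B : not_square m -> OK m x -> quad_coords m x A B ->
  exists2 y, OK m y & x * y = A ^+ 2 - m%:~R * B ^+ 2.
Proof.
move=> m_nsq [_ Zx] [QA QB Dx]; exists (A - B * sqrtC m%:~R); last by rewrite Dx; sqrt_ring.
apply: (@OK_of_quad_coords _ _ A (- B)); first by split; rewrite ?rpredN //; ring.
by apply: quad_conj_Aint; rewrite -?Dx.
Qed.

Section Ideals.

Variables (m : int) (I : aset).
Hypothesis I_ideal : is_ideal m I.

Lemma ideal_sum n (F : 'I_n -> algC) : (forall i, I (F i)) -> I (\sum_i F i).
Proof. by case: I_ideal => _ I0 ID _ IF; elim/big_ind: _. Qed.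

Lemma ideal_mulr r x : OK m r -> I x -> I (x * r).
Proof. by case: I_ideal => _ _ _ IM Or Ix; rewrite mulrC; apply: IM. Qed.

Lemma idealN x : I x -> I (- x).
Proof. by move=> Ix; rewrite -mulrN1; apply: ideal_mulr (OKN (OK1 m)) Ix. Qed.

Lemma idealB x y : I x -> I y -> I (x - y).
Proof. by case: I_ideal => _ _ ID _ Ix Iy; apply: ID => //; apply: idealN. Qed.

(* Adding 1 permutes the classes of a complete residue system r, so the sum
   of the differences (r_i + 1) - r_(f i), which is n, lies in I. *)
Lemma has_norm_nat_mem n : has_norm m I n -> I n%:R.
Proof.
move=> [r [size_r Or cover_r distinct_r]].
have succ_r (i : 'I_n) : exists j : 'I_n, I (r`_i + 1 - r`_j).
  have r_i : r`_i \in r by rewrite mem_nth ?size_r.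
  have [y r_y Iy] := cover_r _ (OKD (Or _ r_i) (OK1 m)).
  have lt_yn : (index y r < n)%N by rewrite -size_r index_mem.
  by exists (Ordinal lt_yn); rewrite /= nth_index.
have [f If] := fin_all_exists succ_r.
have inj_f : injective f.
  move=> i j Efij; apply/val_inj/eqP; apply: contraT => /eqP neq_ij; exfalso.
  apply: (distinct_r i j (ltn_ord i) (ltn_ord j) neq_ij).
  have := idealB (If i) (If j); rewrite Efij.
  by congr I; ring.
have := ideal_sum If; rewrite sumrB big_split /= sumr_const card_ord.
have -> : \sum_(i < n) r`_(f i) = \sum_(i < n) r`_i by rewrite [RHS](reindex_inj inj_f).
by congr I; ring.
Qed.

Lemma ideal_coprimez_1 (a b : int) : coprimez a b -> I a%:~R -> I b%:~R -> I 1.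
Proof.
move=> /coprimezP [[u v] /= Duv] Ia Ib; case: I_ideal => _ _ ID _.
have <- : (u * a + v * b)%:~R = 1 :> algC by rewrite Duv.
rewrite intrD !intrM.
by apply: ID; rewrite mulrC; apply: ideal_mulr => //; apply: OK_int.
Qed.

Lemma prodI_OKr : ideq I (prodI I (OK m)).
Proof.
move=> x; split=> [Ix | [n [a [b [Iab ->]]]]].
  exists 1%N, (fun=> x), (fun=> 1).
  by split=> [_|]; [split; last exact: OK1 | rewrite big_ord1 mulr1].
by apply: ideal_sum => i; have [Ia Ob] := Iab i; apply: ideal_mulr.
Qed.

End Ideals.

Lemma is_prime_ideal_ideq m P Q : ideq P Q -> is_prime_ideal m Q -> is_prime_ideal m P.
Proof.
move=> EPQ [[[QO Q0 QD QM] [x [Qx nz_x]]] [y [Oy nQy]] Qprime].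
split; last by move=> a b Oa Ob /EPQ /Qprime [] // /EPQ; [left | right].
  split; last by exists x; rewrite EPQ.
  split=> [a /EPQ /QO | | a b /EPQ Qa /EPQ Qb | a b Oa /EPQ Qb] //; apply/EPQ => //.
    exact: QD.
  exact: QM.
by exists y; rewrite EPQ.
Qed.

Lemma has_norm_ideq m P Q n : ideq P Q -> has_norm m Q n -> has_norm m P n.
Proof.
move=> EPQ [r [size_r Or cover_r distinct_r]]; exists r; split=> //.
  by move=> x /cover_r [y r_y /EPQ Py]; exists y.
by move=> i j lt_in lt_jn neq_ij /EPQ; apply: distinct_r.
Qed.

Lemma ideal_equiv_sym m I J : ideal_equiv m I J -> ideal_equiv m J I.
Proof. by move=> [a [b [Oa Ob nz_a nz_b EIJ]]]; exists b, a; split=> // x; rewrite EIJ. Qed.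

Lemma Euclidz_dvdM (p : nat) (a b : int) : prime p ->
  (p%:Z %| a * b)%Z = (p%:Z %| a)%Z || (p%:Z %| b)%Z.
Proof. by move=> p_pr; rewrite !dvdzE abszM Euclid_dvdM. Qed.

Lemma Fp_intr_eq0 (p : nat) (z : int) : prime p -> ((z%:~R : 'F_p) == 0) = (p%:Z %| z)%Z.
Proof.
move=> p_pr; rewrite dvdzE /= (dvdn_pcharf (pchar_Fp p_pr)).
by case: z => n /=; rewrite ?NegzE ?mulrNz ?oppr_eq0 pmulrn.
Qed.

Lemma Fp_two_neq0 (p : nat) : prime p -> odd p -> 2%:R != 0 :> 'F_p.
Proof.
move=> p_pr p_odd; rewrite -(dvdn_pcharf (pchar_Fp p_pr)).
by apply/negP => /(dvdn_leq (isT : (0 < 2)%N)); rewrite leqNgt odd_prime_gt2.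
Qed.

Lemma odd_prime_ndvd4 (p : nat) : prime p -> odd p -> ~~ (p%:Z %| 4)%Z.
Proof.
move=> p_pr p_odd; rewrite -Fp_intr_eq0 // -pmulrn (natrM _ 2 2).
by rewrite mulf_neq0 // Fp_two_neq0.
Qed.

Definition ramified_ideal (m : int) (p : nat) : aset :=
  fun x => OK m x /\ x * sqrtC m%:~R / p%:R \in Aint.

Section RamifiedIdeal.

Variables (m : int) (p : nat) (c : int).
Hypotheses (p_prime : prime p) (p_odd : odd p) (Dm : m = p%:Z * c)
  (p_ndvd_c : ~~ (p%:Z %| c)%Z).
Local Notation s := (sqrtC (m%:~R : algC)).
Local Notation J := (ramified_ideal m p).

Let p_neq0 : p%:R != 0 :> algC.
Proof. by rewrite pnatr_eq0 -lt0n prime_gt0. Qed.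

Let pZ_neq0 : p%:Z != 0.
Proof. by rewrite eqz_nat -lt0n prime_gt0. Qed.

Let Dm_algC : m%:~R = p%:R * c%:~R :> algC.
Proof. by rewrite Dm intrM pmulrn. Qed.

Lemma ramified_not_square : not_square m.
Proof.
move=> [z Dz]; have : (p%:Z %| z * z)%Z by rewrite -expr2 -Dz Dm dvdz_mulr.
rewrite Euclidz_dvdM // orbb => /dvdzP [z1 Dz1]; case/negP: p_ndvd_c.
apply/dvdzP; exists (z1 ^+ 2); apply: (mulfI pZ_neq0).
by rewrite -Dm Dz Dz1; ring.
Qed.

Lemma ramified_dvd_4cN N : (p%:Z %| 4 * c * N)%Z -> (p%:Z %| N)%Z.
Proof.
rewrite !Euclidz_dvdM // (negPf p_ndvd_c) (negPf (odd_prime_ndvd4 p_prime p_odd)).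
by rewrite orbF.
Qed.

Lemma ramified_dvd_trace X N U : c * X ^+ 2 - p%:Z * U ^+ 2 = 4 * c * N ->
  (p%:Z %| N)%Z -> (p%:Z %| X)%Z.
Proof.
move=> DcXU /dvdzP [N1 DN1]; have : (p%:Z %| c * (X * X))%Z.
  apply/dvdzP; exists (4 * c * N1 + U ^+ 2).
  by rewrite -expr2 -[c * _](subrK (p%:Z * U ^+ 2)) DcXU DN1; ring.
by rewrite Euclidz_dvdM // (negPf p_ndvd_c) Euclidz_dvdM // orbb.
Qed.

(* x * sqrt m is integral with trace 2 B m, and p divides this trace since its
   square is m (X ^ 2 - 4 N). *)
Lemma ramified_norm_form x A B : quad_coords m x A B -> x \in Aint ->
  exists X N U : int, [/\ A + A = X%:~R, A ^+ 2 - m%:~R * B ^+ 2 = N%:~R,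
     (B + B) * c%:~R = U%:~R & c * X ^+ 2 - p%:Z * U ^+ 2 = 4 * c * N].
Proof.
move=> [QA QB ->] Zx; have m_nsq := ramified_not_square.
have [X [N [DX DN]]] := quad_int_trace_norm m_nsq QA QB Zx.
have QBm : B * m%:~R \in Crat by rewrite rpredM ?rpred_int.
have Zxs : B * m%:~R + A * s \in Aint.
  have -> : B * m%:~R + A * s = (A + B * s) * s by sqrt_ring.
  by rewrite rpredM // sqrtC_int_Aint.
have [V [_ [DV _]]] := quad_int_trace_norm m_nsq QBm QA Zxs.
have DV2 : V ^+ 2 = m * (X ^+ 2 - 4 * N).
  apply: (@intr_inj algC); rewrite !(rmorphXn, rmorphM, rmorphB) /= -DV -DX -DN.
  by ring.
have /dvdzP [U DU] : (p%:Z %| V)%Z.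
  have : (p%:Z %| V * V)%Z by rewrite -expr2 DV2 Dm -mulrA dvdz_mulr.
  by rewrite Euclidz_dvdM // orbb.
exists X, N, U; split=> //.
  apply: (mulIf p_neq0); rewrite -mulrA [c%:~R * _]mulrC -Dm_algC.
  by rewrite mulrDl DV DU intrM pmulrn.
apply: (mulfI pZ_neq0).
have -> : p%:Z * (c * X ^+ 2 - p%:Z * U ^+ 2) = m * X ^+ 2 - V ^+ 2.
  by rewrite Dm DU; ring.
by rewrite DV2 Dm; ring.
Qed.

Lemma ramified_idealE x A B N : quad_coords m x A B -> OK m x ->
  A ^+ 2 - m%:~R * B ^+ 2 = N%:~R -> (J x <-> (p%:Z %| N)%Z).
Proof.
move=> Cx Ox DN; have [QA QB Dx] := Cx; have Zx : x \in Aint by case: Ox.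
have QA' : A / p%:R \in Crat by rewrite rpred_div ?rpred_nat.
have QB' : B * c%:~R \in Crat by rewrite rpredM ?rpred_int.
have Dxs : x * s / p%:R = B * c%:~R + A / p%:R * s.
  have Ec : c%:~R = s * s / p%:R :> algC.
    by rewrite sqrtC_int_mul_self Dm_algC mulrAC divff ?mul1r.
  by rewrite Dx Ec; field.
have Dnorm : (B * c%:~R) ^+ 2 - m%:~R * (A / p%:R) ^+ 2 = - (c%:~R * N%:~R) / p%:R.
  by rewrite -DN Dm_algC; field.
split=> [[_] | /dvdzP [N1 DN1]].
  rewrite Dxs => Zxs.
  have [_ [N' [_ DN']]] := quad_int_trace_norm ramified_not_square QB' QA' Zxs.
  suff : (p%:Z %| c * N)%Z by rewrite Euclidz_dvdM // (negPf p_ndvd_c).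
  apply/dvdzP; exists (- N'); apply: (@intr_inj algC).
  by rewrite mulNr rmorphN /= !intrM -DN' Dnorm -pmulrn; field.
split=> //; have [X [N0 [U [_ _ DU _]]]] := ramified_norm_form Cx Zx.
rewrite Dxs; apply: (@Aint_of_int_trace_norm m _ _ U (- (c * N1))).
  by rewrite -DU; ring.
by rewrite Dnorm DN1 rmorphN /= !intrM -pmulrn; field; exact: p_neq0.
Qed.

Lemma ramified_idealP x : OK m x -> exists A B N, [/\ quad_coords m x A B,
  A ^+ 2 - m%:~R * B ^+ 2 = N%:~R & (J x <-> (p%:Z %| N)%Z)].
Proof.
move=> Ox; have [A [B Cx]] := OK_quad_coords Ox; have Zx : x \in Aint by case: Ox.
have [X [N [U [_ DN _ _]]]] := ramified_norm_form Cx Zx.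
by exists A, B, N; split=> //; apply: ramified_idealE Cx Ox DN.
Qed.

Lemma ramified_ideal_ideal : is_ideal m J.
Proof.
split=> [x [] // | | x y [Ox Zx] [Oy Zy] | r x Or [Ox Zx]].
- by split; [apply: (OK_int m 0) | rewrite !mul0r Aint0].
- by split; [apply: OKD | rewrite !mulrDl rpredD].
by split; [apply: OKM | rewrite -!mulrA rpredM ?mulrA //; case: Or].
Qed.

Lemma ramified_ideal_p : J p%:R.
Proof. by split; [apply: OK_nat | rewrite mulrAC divff ?mul1r ?sqrtC_int_Aint]. Qed.

Lemma ramified_ideal_sqrtC : J s.
Proof.
split; first exact: OK_sqrtC.
by rewrite sqrtC_int_mul_self Dm_algC mulrAC divff ?mul1r ?Aint_int.
Qed.

Lemma ramified_ideal_prime : is_prime_ideal m J.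
Proof.
split.
- split; first exact: ramified_ideal_ideal.
  by exists p%:R; split; [apply: ramified_ideal_p | apply: p_neq0].
- exists 1; split; first exact: OK1.
  have C1 : quad_coords m 1 1 0 by apply: quad_coordsC; rewrite rpred1.
  rewrite (@ramified_idealE _ _ _ 1 C1 (OK1 m)); last by rewrite expr1n expr0n mulr0 subr0.
  by rewrite dvdzE /= dvdn1 => /eqP p1; move: p_prime; rewrite p1.
move=> x y Ox Oy.
have [A [B [N [Cx DN ->]]]] := ramified_idealP Ox.
have [A' [B' [N' [Cy DN' ->]]]] := ramified_idealP Oy.
rewrite (@ramified_idealE _ _ _ (N * N') (quad_coordsM Cx Cy) (OKM Ox Oy)).
  by rewrite Euclidz_dvdM // => /orP.
by rewrite quad_norm_mul DN DN' intrM.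
Qed.

(* For j = X / 2 mod p, 4 c N(x - j) = c (X - 2 j)^2 - p U^2 is divisible by p. *)
Lemma ramified_ideal_sub_nat x : OK m x -> exists2 j, (j < p)%N & J (x - j%:R).
Proof.
move=> Ox; have [A [B Cx]] := OK_quad_coords Ox; have Zx : x \in Aint by case: Ox.
have [X [N [U [DX DN _ DcXU]]]] := ramified_norm_form Cx Zx.
have [j lt_jp Dj] : exists2 j, (j < p)%N & j%:R = X%:~R / 2%:R :> 'F_p.
  pose h : 'F_p := X%:~R / 2%:R; exists h; last exact: natr_Zp.
  exact: leq_trans (ltn_ord h) (eq_leq (Fp_cast p_prime)).
exists j => //; pose N2 := N - X * j%:Z + j%:Z ^+ 2.
have Cx2 : quad_coords m (x - j%:R) (A - j%:R) B.
  have Qj : - (j%:R : algC) \in Crat by rewrite rpredN rpred_nat.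
  by have := quad_coordsD Cx (quad_coordsC m Qj); rewrite addr0.
have Ox2 : OK m (x - j%:R) by apply/OKD/OKN/OK_nat.
rewrite (@ramified_idealE _ _ _ N2 Cx2 Ox2); last first.
  have -> : (A - j%:R) ^+ 2 - m%:~R * B ^+ 2 =
      (A ^+ 2 - m%:~R * B ^+ 2) - (A + A) * j%:R + j%:R ^+ 2 by ring.
  by rewrite DN DX /N2 rmorphD rmorphB rmorphM rmorphXn /= -pmulrn.
apply: ramified_dvd_4cN.
have -> : 4 * c * N2 = c * (X - 2 * j%:Z) ^+ 2 - p%:Z * U ^+ 2.
  have -> : c * (X - 2 * j%:Z) ^+ 2 - p%:Z * U ^+ 2 =
    (c * X ^+ 2 - p%:Z * U ^+ 2) - 4 * c * X * j%:Z + 4 * c * j%:Z ^+ 2 by ring.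
  by rewrite DcXU /N2; ring.
apply: rpredB; last by rewrite dvdz_mulr.
apply: dvdz_mull; rewrite -Fp_intr_eq0 // rmorphXn rmorphB rmorphM /= -pmulrn Dj.
by rewrite mulrC divfK ?subrr ?expr0n // Fp_two_neq0.
Qed.

Lemma ramified_ideal_nat_distinct i j : (i < p)%N -> (j < p)%N -> i <> j ->
  ~ J (i%:R - j%:R).
Proof.
move=> lt_ip lt_jp neq_ij.
have Qij : i%:R - j%:R \in Crat by rewrite rpredB ?rpred_nat.
have Oij : OK m (i%:R - j%:R) by apply/OKD/OKN/OK_nat; apply: OK_nat.
rewrite (@ramified_idealE _ _ _ ((i%:Z - j%:Z) ^+ 2) (quad_coordsC m Qij) Oij); last first.
  by rewrite expr0n mulr0 subr0 rmorphXn rmorphB /= -!pmulrn.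
rewrite Euclidz_dvdM // orbb -Fp_intr_eq0 // rmorphB /= -!pmulrn subr_eq0 => /eqP Eij.
by apply: neq_ij; move: (congr1 val Eij); rewrite /= !val_Fp_nat // !modn_small.
Qed.

Lemma ramified_ideal_norm : has_norm m J p.
Proof.
exists [seq i%:R | i <- iota 0 p]; split.
- by rewrite size_map size_iota.
- by move=> y /mapP [i _ ->]; apply: OK_nat.
- move=> x /ramified_ideal_sub_nat [j lt_jp Jxj]; exists j%:R => //.
  by apply: map_f; rewrite mem_iota.
move=> i j lt_ip lt_jp.
rewrite !(nth_map 0%N) ?size_iota // !nth_iota // !add0n.
exact: ramified_ideal_nat_distinct.
Qed.

(* x^2 / p has trace (X^2 - 2 N) / p and norm (N / p)^2, integers as p divides
   both X and N. *)
Lemma ramified_ideal_sqr_div x : J x -> OK m (x * x / p%:R).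
Proof.
move=> Jx; have Ox : OK m x by case: Jx.
have [A [B Cx]] := OK_quad_coords Ox; have Zx : x \in Aint by case: Ox.
have [X [N [U [DX DN _ DcXU]]]] := ramified_norm_form Cx Zx.
have p_dvd_N : (p%:Z %| N)%Z by rewrite -(ramified_idealE Cx Ox DN).
have /dvdzP [X1 DX1] := ramified_dvd_trace DcXU p_dvd_N.
have /dvdzP [N1 DN1] := p_dvd_N.
have [QA QB Dx] := Cx.
pose A2 := (A ^+ 2 + m%:~R * B ^+ 2) / p%:R; pose B2 := (A * B + A * B) / p%:R.
have Dxx : x * x / p%:R = A2 + B2 * s by rewrite Dx /A2 /B2; sqrt_field.
apply: (@OK_of_quad_coords _ _ A2 B2).
  split=> //; rewrite rpred_div ?rpred_nat // ?rpredD ?rpredM ?rpredX ?rpred_int //.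
rewrite Dxx; apply: (@Aint_of_int_trace_norm m _ _ (p%:Z * X1 ^+ 2 - 2 * N1) (N1 ^+ 2)).
  have -> : A2 + A2 = ((A + A) ^+ 2 - 2%:R * (A ^+ 2 - m%:~R * B ^+ 2)) / p%:R.
    by rewrite /A2; ring.
  rewrite DX DN DX1 DN1 !(rmorphB, rmorphM, rmorphXn) /= -!pmulrn.
  by field; exact: p_neq0.
have -> : A2 ^+ 2 - m%:~R * B2 ^+ 2 = (A ^+ 2 - m%:~R * B ^+ 2) ^+ 2 / p%:R ^+ 2.
  by rewrite /A2 /B2; field.
by rewrite DN DN1 rmorphXn rmorphM /= -pmulrn; field; exact: p_neq0.
Qed.

Lemma ramified_ideal_sub_prime P : is_prime_ideal m P -> P p%:R ->
  forall x, J x -> P x.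
Proof.
move=> [[P_ideal _] _ P_prime] Pp x Jx; have Ox : OK m x by case: Jx.
have Pxx : P (x * x).
  by have := ideal_mulr P_ideal (ramified_ideal_sqr_div Jx) Pp; rewrite mulrC divfK.
by case: (P_prime x x Ox Ox Pxx).
Qed.

(* If p does not divide N(x) = x x', then P contains the coprime integers p and
   N(x), hence 1. *)
Lemma prime_ideal_sub_ramified P : is_prime_ideal m P -> P p%:R ->
  forall x, P x -> J x.
Proof.
move=> [[P_ideal _] [y [Oy nPy]] _] Pp x Px.
have Ox : OK m x by case: P_ideal => PO _ _ _; apply: PO.
have [A [B [N [Cx DN ->]]]] := ramified_idealP Ox.
apply: contraT => p_ndvd_N; case: nPy; rewrite -[y]mul1r.
apply: (ideal_mulr P_ideal Oy); apply: (@ideal_coprimez_1 m P P_ideal p N).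
  by rewrite coprimezE /= prime_coprime // -dvdzE.
  by rewrite -pmulrn.
have [x' Ox' Exx'] := OK_mul_conj ramified_not_square Ox Cx.
by rewrite -DN -Exx'; apply: (ideal_mulr P_ideal Ox' Px).
Qed.

Lemma ramified_ideal_unique P : is_prime_ideal m P -> has_norm m P p -> ideq P J.
Proof.
move=> P_prime P_norm; have Pp : P p%:R.
  by apply: has_norm_nat_mem P_norm; case: P_prime => [[]].
by move=> x; split; [apply: prime_ideal_sub_ramified | apply: ramified_ideal_sub_prime].
Qed.

Lemma ramified_ideal_Pi : is_Pi m p J.
Proof.
exists [:: J]; split=> [P | [|i] // _ | [|i] [|j] // | ].
- split=> [[P_prime P_norm] | [[|i] // _ EPJ]].
    by exists 0%N => //; apply: ramified_ideal_unique.
  by split; [apply: is_prime_ideal_ideq EPJ ramified_ideal_prime |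
             apply: has_norm_ideq EPJ ramified_ideal_norm].
- by split; [apply: ramified_ideal_prime | apply: ramified_ideal_norm].
exact: prodI_OKr ramified_ideal_ideal.
Qed.

Lemma ramified_ideal_Polya : in_Polya m J.
Proof.
split; first by case: ramified_ideal_prime.
exists [:: p], [::], [:: J], [::]; split=> // [[|i] // _ |].
  by split; [exists p, 1%N; rewrite expn1 | apply: ramified_ideal_Pi].
by exists 1, 1; split; rewrite ?oner_eq0 //; apply: OK1.
Qed.

(* As p divides X, c X^2 - p U^2 = 4 c p e gives U^2 = - 4 c e mod p. *)
Lemma ramified_norm_square x A B e : quad_coords m x A B -> x \in Aint ->
  A ^+ 2 - m%:~R * B ^+ 2 = (p%:Z * e)%:~R -> exists u : 'F_p, u ^+ 2 = (- (c * e))%:~R.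
Proof.
move=> Cx Zx Dnorm; have [X [N [U [_ DN _ DcXU]]]] := ramified_norm_form Cx Zx.
have {DN Dnorm} DN : N = p%:Z * e by apply: (@intr_inj algC); rewrite -DN -Dnorm.
have p_dvd_N : (p%:Z %| N)%Z by rewrite DN dvdz_mulr.
have /dvdzP [X1 DX1] := ramified_dvd_trace DcXU p_dvd_N.
have DU2 : U ^+ 2 = p%:Z * (c * X1 ^+ 2) - 4 * c * e.
  apply: (mulfI pZ_neq0).
  have -> : p%:Z * U ^+ 2 = c * X ^+ 2 - 4 * c * N by rewrite -DcXU; ring.
  by rewrite DN DX1; ring.
exists (U%:~R / 2%:R); rewrite expr_div_n -rmorphXn /= DU2.
rewrite rmorphB !rmorphM /= -pmulrn pchar_Fp_0 // mul0r sub0r rmorphN /= intrM.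
have two_neq0 := Fp_two_neq0 p_prime p_odd.
by field; rewrite (natrM _ 2 2) mulf_neq0.
Qed.

End RamifiedIdeal.

Lemma dvdz_mul_eq_sqr (d a b : int) : d != 0 -> (d %| a)%Z -> (d %| b)%Z ->
  a * b = d ^+ 2 -> a = d \/ a = - d.
Proof.
move=> nz_d /dvdzP [k ->] /dvdzP [l ->] Eab.
have kl1 : k * l = 1.
  by apply: (mulIf (expf_neq0 2 nz_d)); rewrite mul1r -[RHS]Eab; ring.
have /eqP : (`|k| * `|l| = 1)%N by rewrite -abszM kl1.
rewrite muln_eq1 => /andP [/eqP k1 _].
by case: k k1 {Eab kl1} => [n /= -> | n /= [->]]; [left | right]; rewrite ?NegzE; ring.
Qed.

Section TwoRamifiedPrimes.

Variables (m : int) (p q : nat) (cp cq : int).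
Hypotheses (p_prime : prime p) (p_odd : odd p) (Dmp : m = p%:Z * cp)
  (p_ndvd_cp : ~~ (p%:Z %| cp)%Z).
Hypotheses (q_prime : prime q) (Dmq : m = q%:Z * cq)
  (q_ndvd_cq : ~~ (q%:Z %| cq)%Z) (neq_pq : p != q).
Local Notation s := (sqrtC (m%:~R : algC)).
Local Notation J := (ramified_ideal m).

(* From a J_p = b J_q, write b q = a w and a p = b z; comparing with the images
   b sqrt m and a sqrt m shows that w sqrt m / q and z sqrt m / p are integral. *)
Lemma ramified_equiv_factor_pq : ideal_equiv m (J p) (J q) ->
  exists w z, [/\ J p w, J q w, J p z, J q z & w * z = p%:R * q%:R].
Proof.
move=> [a [b [Oa Ob nz_a nz_b Eab]]].
have p_neq0 : p%:R != 0 :> algC by rewrite pnatr_eq0 -lt0n prime_gt0.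
have q_neq0 : q%:R != 0 :> algC by rewrite pnatr_eq0 -lt0n prime_gt0.
have transfer y I J' c d : ideq (scaleI c I) (scaleI d J') -> J' y ->
    exists2 w, I w & d * y = c * w.
  by move=> E J'y; have [w Iw ->] := (E (d * y)).2 (ex_intro2 _ _ y J'y erefl); exists w.
have [w Jpw Dw] := transfer _ _ _ _ _ Eab (ramified_ideal_p m q_prime).
have [w' Jpw' Dw'] := transfer _ _ _ _ _ Eab (ramified_ideal_sqrtC q_prime Dmq).
have Eba : ideq (scaleI b (J q)) (scaleI a (J p)) by move=> x; rewrite Eab.
have [z Jqz Dz] := transfer _ _ _ _ _ Eba (ramified_ideal_p m p_prime).
have [z' Jqz' Dz'] := transfer _ _ _ _ _ Eba (ramified_ideal_sqrtC p_prime Dmp).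
exists w, z; split=> //.
- split; first by case: Jpw.
  have -> : w * s / q%:R = w' by apply: (mulfI nz_a); rewrite -Dw' !mulrA -Dw; field.
  by case: Jpw' => [[]].
- split; first by case: Jqz.
  have -> : z * s / p%:R = z' by apply: (mulfI nz_b); rewrite -Dz' !mulrA -Dz; field.
  by case: Jqz' => [[]].
apply: (mulfI (mulf_neq0 nz_a nz_b)).
have -> : a * b * (w * z) = (a * w) * (b * z) by ring.
by rewrite -Dw -Dz; ring.
Qed.

Lemma ramified_pair_dvd_norm x A B N : J p x -> J q x -> quad_coords m x A B ->
  A ^+ 2 - m%:~R * B ^+ 2 = N%:~R -> (p%:Z * q%:Z %| N)%Z.
Proof.
move=> Jpx Jqx Cx DN; have Ox : OK m x by case: Jpx.
rewrite Gauss_dvdz; last by rewrite coprimezE /= prime_coprime // dvdn_prime2.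
apply/andP; split; first exact/(ramified_idealE p_prime Dmp p_ndvd_cp Cx Ox DN).
exact/(ramified_idealE q_prime Dmq q_ndvd_cq Cx Ox DN).
Qed.

(* The element w of ramified_equiv_factor_pq has norm +-p q, so that -+q cp is
   a square modulo p. *)
Lemma ramified_ideal_not_equiv :
  (forall u : 'F_p, u ^+ 2 != (q%:Z * cp)%:~R) ->
  (forall u : 'F_p, u ^+ 2 != (- (q%:Z * cp))%:~R) ->
  ~ ideal_equiv m (J p) (J q).
Proof.
move=> nsq_qcp nsq_Nqcp /ramified_equiv_factor_pq [w [z [Jpw Jqw Jpz Jqz Dwz]]].
have m_nsq := ramified_not_square p_prime Dmp p_ndvd_cp.
have [A [B [N [Cw DN _]]]] := ramified_idealP p_prime Dmp p_ndvd_cp (Jpw.1).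
have [A' [B' [N' [Cz DN' _]]]] := ramified_idealP p_prime Dmp p_ndvd_cp (Jpz.1).
have DNN' : N * N' = (p%:Z * q%:Z) ^+ 2.
  have Qpq : p%:R * q%:R \in Crat by rewrite rpredM ?rpred_nat.
  apply: (@intr_inj algC); rewrite intrM -DN -DN' (quad_norm_mul_Crat m_nsq Cw Cz Qpq Dwz).
  by rewrite rmorphXn rmorphM /= -!pmulrn.
have Zw : w \in Aint by case: Jpw => [[]].
have norm_square e : N = p%:Z * e -> exists u : 'F_p, u ^+ 2 = (- (cp * e))%:~R.
  move=> DNe; apply: (ramified_norm_square p_prime p_odd Dmp p_ndvd_cp Cw Zw).
  by rewrite DN DNe.
have nz_pq : p%:Z * q%:Z != 0 by rewrite mulf_neq0 // eqz_nat -lt0n prime_gt0.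
have [DNpq | DNpq] := dvdz_mul_eq_sqr nz_pq (ramified_pair_dvd_norm Jpw Jqw Cw DN)
  (ramified_pair_dvd_norm Jpz Jqz Cz DN') DNN'.
  by have [u Du] := norm_square _ DNpq; case/eqP: (nsq_Nqcp u); rewrite Du mulrC.
have [u Du] := norm_square (- q%:Z) (etrans DNpq (esym (mulrN _ _))).
by case/eqP: (nsq_qcp u); rewrite Du mulrN opprK mulrC.
Qed.

End TwoRamifiedPrimes.

Lemma Fp_nonsquare_exists p : prime p -> odd p -> exists n : 'F_p, forall u, u ^+ 2 != n.
Proof.
move=> p_pr p_odd.
suff /existsP [n /forallP nsq_n] : [exists n : 'F_p, [forall u, u ^+ 2 != n]] by exists n.
apply: contraT; rewrite negb_exists => /forallP all_sq.
have sq_all (n : 'F_p) : exists u, u ^+ 2 = n.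
  by move: (all_sq n); rewrite negb_forall => /existsP [u /negPn /eqP]; exists u.
have [g Dg] := fin_all_exists sq_all.
have inj_g : injective g by move=> a b Eab; rewrite -[a]Dg -[b]Dg Eab.
have [a Da] := codomP (injF_onto inj_g 1).
have [b Db] := codomP (injF_onto inj_g (-1)).
have a1 : a = 1 by rewrite -[a]Dg -Da expr1n.
have b1 : b = 1 by rewrite -[b]Dg -Db sqrrN expr1n.
have /eqP : 1 = -1 :> 'F_p by rewrite {1}Da Db a1 b1.
by rewrite -addr_eq0 -mulr2n (negPf (Fp_two_neq0 p_pr p_odd)).
Qed.

Definition pythagorean_prime (p : nat) :=
  [/\ prime p, odd p & exists w : 'F_p, w ^+ 2 = -1].

Lemma pythagorean_prime_gt (B : nat) : exists2 p, (B < p)%N & pythagorean_prime p.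
Proof.
pose y := (B.+2)`!; pose N := (y ^ 2).+1.
have N_gt1 : (1 < N)%N by rewrite ltnS expn_gt0 fact_gt0.
have p_pr : prime (pdiv N) := pdiv_prime N_gt1.
have lt_Bp : (B.+2 < pdiv N)%N.
  rewrite ltnNge; apply/negP => le_pB.
  have p_dvd_y2 : (pdiv N %| y ^ 2)%N by rewrite dvdn_exp // dvdn_fact // prime_gt0.
  have : (pdiv N %| 1)%N by rewrite -(dvdn_addr 1 p_dvd_y2) addn1 pdiv_dvd.
  by rewrite dvdn1 => /eqP p1; rewrite p1 in p_pr.
exists (pdiv N); first by rewrite (ltn_trans _ lt_Bp).
split=> //; first by case: (even_prime p_pr) => // p2; rewrite p2 in lt_Bp.
exists y%:R; apply/eqP; rewrite -addr_eq0 -natrX natr1 -(dvdn_pcharf (pchar_Fp p_pr)).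
exact: pdiv_dvd.
Qed.

Lemma pythagorean_primes_gt (n B : nat) : exists s : seq nat,
  [/\ size s = n, uniq s & forall x, x \in s -> (B < x)%N /\ pythagorean_prime x].
Proof.
elim: n => [|n [s [size_s uniq_s s_gt]]]; first by exists [::].
have [x] := pythagorean_prime_gt (maxn B (\max_(y <- s) y)).
rewrite gtn_max => /andP [lt_Bx lt_sx] x_pyth.
exists (x :: s); split=> [| | y]; first by rewrite /= size_s.
  rewrite /= uniq_s andbT; apply: contraTN lt_sx => s_x.
  by rewrite -leqNgt (leq_bigmax_seq (F := fun y => y) x s_x).
by rewrite inE => /predU1P [-> | /s_gt].
Qed.

Definition is_sqr_mod (p n : nat) : bool := [exists u : 'F_p, u ^+ 2 == n%:R].

Lemma Fp_nonsquareN p (a : 'F_p) : (exists w : 'F_p, w ^+ 2 = -1) ->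
  (forall u, u ^+ 2 != a) -> forall u, u ^+ 2 != - a.
Proof.
move=> [w Dw] nsq_a u; apply/eqP => Du; case/eqP: (nsq_a (w * u)).
by rewrite exprMn Dw Du mulN1r opprK.
Qed.

(* All y share the quadratic character b, so r = 1 (if b is false) or a
   nonresidue r (if b is true) makes every y r a nonresidue. *)
Lemma nonresidue_multiplier x (t : seq nat) b : prime x -> odd x -> x \notin t ->
  (forall y, y \in t -> prime y) -> (forall y, y \in t -> is_sqr_mod x y = b) ->
  exists2 r : int, ~~ (x%:Z %| r)%Z &
    forall y, y \in t -> forall u : 'F_x, u ^+ 2 != (y%:Z * r)%:~R.
Proof.
move=> x_pr x_odd t_x t_prime sqr_t.
case: b sqr_t => sqr_t; last first.
  exists 1; first by rewrite -Fp_intr_eq0 // oner_eq0.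
  move=> y /sqr_t /negbT; rewrite negb_exists => /forallP nsq_y u.
  by rewrite mulr1 -pmulrn; apply: nsq_y.
have [n nsq_n] := Fp_nonsquare_exists x_pr x_odd.
have nz_n : n != 0 by apply: contraNneq (nsq_n 0) => ->; rewrite expr0n.
exists (n : nat)%:Z; first by rewrite -Fp_intr_eq0 // -pmulrn natr_Zp.
move=> y t_y u; have /existsP [v /eqP Dv] := sqr_t y t_y.
have nz_v : v != 0.
  apply: contraNneq (_ : y%:R != 0 :> 'F_x) => [v0 | ]; first by rewrite -Dv v0 expr0n.
  rewrite -(dvdn_pcharf (pchar_Fp x_pr)) dvdn_prime2 //; last exact: t_prime.
  by apply: contraNneq t_x => ->.
rewrite intrM -!pmulrn natr_Zp -Dv; apply/eqP => Du; case/eqP: (nsq_n (u / v)).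
by rewrite expr_div_n Du mulrAC divff ?mul1r // expf_neq0.
Qed.

(* r x is the residue of m / x modulo x that the congruences on m will impose. *)
Definition nonresidue_chain (t : seq nat) (r : nat -> int) := uniq t /\
  forall j, (j < size t)%N ->
  [/\ pythagorean_prime (nth 0%N t j), ~~ ((nth 0%N t j)%:Z %| r (nth 0%N t j))%Z &
      forall i, (i < j)%N -> forall u : 'F_(nth 0%N t j),
        u ^+ 2 != ((nth 0%N t i)%:Z * r (nth 0%N t j))%:~R].

Lemma nonresidue_chain_eq t rho rho' : {in t, rho =1 rho'} ->
  nonresidue_chain t rho -> nonresidue_chain t rho'.
Proof.
move=> E [uniq_t chain_t]; split=> // j lt_jt.
by rewrite -E ?mem_nth //; apply: chain_t.
Qed.

Lemma nonresidue_chain_rcons t rho x b : nonresidue_chain t rho ->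
  pythagorean_prime x -> x \notin t -> (forall y, y \in t -> is_sqr_mod x y = b) ->
  exists rho', nonresidue_chain (rcons t x) rho'.
Proof.
move=> [uniq_t chain_t] [x_pr x_odd x_sqrtN1] t_x sqr_t.
have t_prime y : y \in t -> prime y.
  by case/(nthP 0%N) => j lt_jt <-; have [[]] := chain_t j lt_jt.
have [r x_ndvd_r nsq_r] := nonresidue_multiplier x_pr x_odd t_x t_prime sqr_t.
exists (fun y => if y == x then r else rho y); split; first by rewrite rcons_uniq t_x.
move=> j; rewrite size_rcons ltnS leq_eqVlt => /predU1P [-> | lt_jt].
  rewrite nth_rcons ltnn eqxx eqxx; split=> // i lt_it u.
  by rewrite nth_rcons lt_it; apply/nsq_r/mem_nth.
have x_neq_tj : (nth 0%N t j == x) = false.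
  by apply: contraNF t_x => /eqP <-; apply: mem_nth.
rewrite nth_rcons lt_jt x_neq_tj; have [pyth_j ndvd_j nsq_j] := chain_t j lt_jt.
by split=> // i lt_ij; rewrite nth_rcons (ltn_trans lt_ij lt_jt); apply: nsq_j.
Qed.

(* Pigeonhole on the quadratic character modulo the head of s: one of the two
   classes keeps half of the remaining primes. *)
Lemma nonresidue_chain_sub L (s : seq nat) : uniq s ->
  (forall x, x \in s -> pythagorean_prime x) -> (2 ^ L <= size s)%N ->
  exists t rho, [/\ size t = L, {subset t <= s} & nonresidue_chain t rho].
Proof.
elim: L s => [|L IHL] s uniq_s pyth_s le_s.
  by exists [::], (fun=> 0); split=> //; split.
case: s uniq_s pyth_s le_s => [|x s]; first by rewrite leqn0 expn_eq0.
rewrite cons_uniq => /andP [s_x uniq_s] pyth_s le_s.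
have pyth_x := pyth_s x (mem_head x s).
have [b le_sb] : exists b, (2 ^ L <= count (fun y => is_sqr_mod x y == b) s)%N.
  have := count_predC (is_sqr_mod x) s; rewrite /= expnS in le_s.
  case: (leqP (2 ^ L) (count (is_sqr_mod x) s)) => [le_sq | lt_sq] Ecount.
    by exists true; rewrite (eq_count (fun y => eqb_id _)).
  exists false; rewrite (@eq_count _ _ (predC (is_sqr_mod x))) => [|y]; last exact: eqbF_neg.
  by move: Ecount lt_sq le_s; set k := (2 ^ L)%N; lia.
pose s_b := [seq y <- s | is_sqr_mod x y == b].
have [t [rho [size_t sub_t chain_t]]] : exists t rho,
    [/\ size t = L, {subset t <= s_b} & nonresidue_chain t rho].
  apply: IHL; rewrite ?filter_uniq ?size_filter //.
  by move=> y; rewrite mem_filter => /andP [_ s_y]; apply: pyth_s; rewrite inE s_y orbT.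
have t_x : x \notin t by apply: contra s_x => /sub_t; rewrite mem_filter => /andP [].
have [rho' chain_t'] : exists rho', nonresidue_chain (rcons t x) rho'.
  apply: (nonresidue_chain_rcons (b := b) chain_t pyth_x t_x) => y /sub_t.
  by rewrite mem_filter => /andP [/eqP].
exists (rcons t x), rho'; split=> //; first by rewrite size_rcons size_t.
move=> y; rewrite mem_rcons inE => /predU1P [-> | /sub_t]; first exact: mem_head.
by rewrite mem_filter inE => /andP [_ ->]; rewrite orbT.
Qed.

Lemma sqr_dvdz_sub_mul (x : nat) (r z : int) : prime x -> ~~ (x%:Z %| r)%Z ->
  (x%:Z ^+ 2 %| z - x%:Z * r)%Z ->
  exists c, [/\ z = x%:Z * c, ~~ (x%:Z %| c)%Z & (c%:~R : 'F_x) = r%:~R].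
Proof.
move=> x_pr x_ndvd_r /dvdzP [k Dk].
have Ec : ((r + k * x%:Z)%:~R : 'F_x) = r%:~R.
  by rewrite intrD intrM -pmulrn pchar_Fp_0 // mulr0 addr0.
exists (r + k * x%:Z); split=> //; first by rewrite -[z](subrK (x%:Z * r)) Dk; ring.
by rewrite -Fp_intr_eq0 // Ec Fp_intr_eq0.
Qed.

Lemma polya_gt_of_chain (R : realType) (M : R) (m : int) t rho :
  nonresidue_chain t rho -> (forall x, x \in t -> (x%:Z ^+ 2 %| m - x%:Z * rho x)%Z) ->
  M < (size t)%:R -> polya_gt m M.
Proof.
move=> [uniq_t chain_t] dvd_t lt_M.
have factor j : (j < size t)%N -> exists c, [/\ m = (nth 0%N t j)%:Z * c,
    ~~ ((nth 0%N t j)%:Z %| c)%Z & (c%:~R : 'F_(nth 0%N t j)) = (rho (nth 0%N t j))%:~R].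
  move=> lt_jt; have [[x_pr _ _] x_ndvd _] := chain_t j lt_jt.
  exact: sqr_dvdz_sub_mul x_pr x_ndvd (dvd_t _ (mem_nth 0%N lt_jt)).
have not_equiv i j : (i < j)%N -> (j < size t)%N ->
    ~ ideal_equiv m (ramified_ideal m (nth 0%N t j)) (ramified_ideal m (nth 0%N t i)).
  move=> lt_ij lt_jt; have lt_it := ltn_trans lt_ij lt_jt.
  have [[pj_pr pj_odd pj_sqrtN1] _ nsq_j] := chain_t j lt_jt.
  have [[pi_pr _ _] _ _] := chain_t i lt_it.
  have [cj [Dmj ndvd_j Ecj]] := factor j lt_jt; have [ci [Dmi ndvd_i _]] := factor i lt_it.
  have nsq (u : 'F_(nth 0%N t j)) : u ^+ 2 != ((nth 0%N t i)%:Z * cj)%:~R.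
    by rewrite intrM Ecj -intrM; apply: nsq_j.
  apply: (ramified_ideal_not_equiv pj_pr pj_odd Dmj ndvd_j pi_pr Dmi ndvd_i) => // [|u].
    by rewrite nth_uniq // neq_ltn lt_ij orbT.
  by rewrite rmorphN /=; apply: Fp_nonsquareN.
exists [seq ramified_ideal m x | x <- t]; rewrite size_map.
split=> // [i lt_it | i j lt_it lt_jt neq_ij].
  rewrite (nth_map 0%N) //; have [c [Dm ndvd _]] := factor i lt_it.
  have [[x_pr x_odd _] _ _] := chain_t i lt_it.
  exact: ramified_ideal_Polya x_pr x_odd Dm ndvd.
rewrite !(nth_map 0%N) //; case: (ltngtP i j) => [lt_ij | lt_ji | eq_ij] //.
  by move/ideal_equiv_sym; apply: not_equiv.
exact: not_equiv.
Qed.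

Lemma chinese_prime_sqr (cs : seq (nat * int)) : uniq (map fst cs) ->
  (forall c, c \in cs -> prime c.1) ->
  exists d Q : int, [/\ 0 < Q,
    forall y : nat, prime y -> y \notin map fst cs -> coprimez (y%:Z ^+ 2) Q &
    forall c, c \in cs -> (c.1%:Z ^+ 2 %| Q)%Z /\ (c.1%:Z ^+ 2 %| d - c.2)%Z].
Proof.
elim: cs => [|[x r] cs IHcs] /=.
  by exists 0, 1; split=> // y _ _; rewrite coprimezE /= coprimen1.
move=> /andP [cs_x uniq_cs] cs_prime.
have x_pr : prime x by apply: (cs_prime (x, r)); rewrite mem_head.
have [d [Q [Q_gt0 coprime_Q dvd_Q]]] : exists d Q : int, [/\ 0 < Q,
    forall y : nat, prime y -> y \notin map fst cs -> coprimez (y%:Z ^+ 2) Q &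
    forall c, c \in cs -> (c.1%:Z ^+ 2 %| Q)%Z /\ (c.1%:Z ^+ 2 %| d - c.2)%Z].
  by apply: IHcs => // c cs_c; apply: cs_prime; rewrite inE cs_c orbT.
have coprime_xQ := coprime_Q x x_pr cs_x.
exists (zchinese (x%:Z ^+ 2) Q r d), (x%:Z ^+ 2 * Q); split.
- by rewrite mulr_gt0 // exprn_gt0 // ltz_nat prime_gt0.
- move=> y y_pr; rewrite inE negb_or => /andP [neq_yx cs_y].
  rewrite coprimezMr coprime_Q // andbT coprimez_pexpl // coprimez_pexpr //.
  by rewrite coprimezE /= prime_coprime // dvdn_prime2.
move=> c; rewrite inE => /predU1P [-> | cs_c] /=.
  by rewrite dvdz_mulr // -eqz_mod_dvd zchinese_modl.
have [dvd_cQ dvd_cd] := dvd_Q c cs_c; split; first exact: dvdz_mull.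
have -> : zchinese (x%:Z ^+ 2) Q r d - c.2 =
    (zchinese (x%:Z ^+ 2) Q r d - d) + (d - c.2) by ring.
by rewrite rpredD // (dvdz_trans dvd_cQ) // -eqz_mod_dvd zchinese_modr.
Qed.

(* Each new chain uses primes beyond all those already constrained, so the
   congruences prescribed for different shifts i never conflict. *)
Lemma chain_congruences (L k : nat) : exists (cs : seq (nat * int))
    (ts : nat -> seq nat) (rho : nat -> int),
  [/\ uniq (map fst cs), forall c, c \in cs -> prime c.1 &
   forall i, (1 <= i <= k)%N -> [/\ size (ts i) = L, nonresidue_chain (ts i) rho &
      forall x, x \in ts i -> (x, x%:Z * rho x - i%:Z) \in cs]].
Proof.
elim: k => [|k [cs [ts [rho [uniq_cs cs_prime chain_ts]]]]].
  by exists [::], (fun=> [::]), (fun=> 0); split=> // i /andP [/leq_trans le_i /le_i].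
pose B := \max_(c <- cs) c.1.
have le_csB c : c \in cs -> (c.1 <= B)%N.
  by move=> cs_c; apply: (leq_bigmax_seq (F := fst) c cs_c).
have [s [size_s uniq_s s_gtB]] := pythagorean_primes_gt (2 ^ L) B.
have [t [rt [size_t sub_ts chain_t]]] :=
  nonresidue_chain_sub uniq_s (fun x s_x => (s_gtB x s_x).2) (eq_leq (esym size_s)).
have t_gtB x : x \in t -> (B < x)%N by move/sub_ts/s_gtB => [].
have cs_t c : c \in cs -> c.1 \notin t.
  by move/le_csB => le_cB; apply/negP => /t_gtB; rewrite ltnNge le_cB.
pose rho' y := if y \in t then rt y else rho y.
pose cs' := [seq (x, x%:Z * rt x - k.+1%:Z) | x <- t] ++ cs.
exists cs', (fun i => if i == k.+1 then t else ts i), rho'; split.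
- rewrite /cs' map_cat cat_uniq uniq_cs andbT -map_comp map_id.
  case: chain_t => -> _ /=; apply/hasPn => _ /mapP [c cs_c ->].
  exact: cs_t.
- move=> c; rewrite mem_cat => /orP [/mapP [x t_x ->] | /cs_prime //].
  by have [_ [x_pr _ _]] := s_gtB x (sub_ts x t_x).
move=> i /andP [le_1i]; rewrite leq_eqVlt ltnS => /predU1P [-> | le_ik].
  rewrite eqxx; split=> //.
    by apply: nonresidue_chain_eq chain_t => x t_x; rewrite /rho' t_x.
  by move=> x t_x; rewrite mem_cat /rho' t_x map_f.
have [size_i chain_i cs_i] := chain_ts i (introT andP (conj le_1i le_ik)).
have t_i x : x \in ts i -> x \notin t by move/cs_i/cs_t.
rewrite ltn_eqF ?ltnS //; split=> //.
  by apply: nonresidue_chain_eq chain_i => x /t_i /negPf; rewrite /rho' => ->.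
by move=> x ts_x; rewrite mem_cat /rho' (negPf (t_i x ts_x)) cs_i ?orbT.
Qed.

Lemma polya_gt_progression (R : realType) (M : R) (k : nat) :
  exists d Q : int, 0 < Q /\ forall (K : int) (i : nat), (1 <= i <= k)%N ->
    not_square (d + K * Q + i%:Z) /\ polya_gt (d + K * Q + i%:Z) M.
Proof.
pose L := (Num.trunc M).+1; have lt_ML : M < L%:R := truncnS_gt M.
have [cs [ts [rho [uniq_cs cs_prime chain_ts]]]] := chain_congruences L k.
have [d [Q [Q_gt0 _ dvd_cs]]] := chinese_prime_sqr uniq_cs cs_prime.
exists d, Q; split=> // K i le_ik.
have [size_i chain_i cs_i] := chain_ts i le_ik.
have dvd_i x : x \in ts i -> (x%:Z ^+ 2 %| d + K * Q + i%:Z - x%:Z * rho x)%Z.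
  move=> ts_x; have [dvd_Q dvd_d] := dvd_cs _ (cs_i x ts_x).
  have -> : d + K * Q + i%:Z - x%:Z * rho x = (d - (x%:Z * rho x - i%:Z)) + K * Q by ring.
  by rewrite rpredD // dvdz_mull.
split; last by apply: polya_gt_of_chain chain_i dvd_i _; rewrite size_i.
have lt_0i : (0 < size (ts i))%N by rewrite size_i.
have [[x_pr _ _] x_ndvd _] := chain_i.2 0%N lt_0i.
have [c [Dm c_ndvd _]] := sqr_dvdz_sub_mul x_pr x_ndvd (dvd_i _ (mem_nth 0%N lt_0i)).
exact: ramified_not_square x_pr Dm c_ndvd.
Qed.

Unset Implicit Arguments.
Set Strict Implicit.

Theorem mainTheorem3 (R : realType) (k : nat) (M : R) :
  (1 <= k)%N -> 0 < M ->
  (exists d : int, forall i : nat, (1 <= i <= k)%N ->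
     [/\ 0 < d + i%:Z, not_square (d + i%:Z) & polya_gt (d + i%:Z) M]) /\
  (exists d' : int, forall i : nat, (1 <= i <= k)%N ->
     d' + i%:Z < 0 /\ polya_gt (d' + i%:Z) M).
Proof.
move=> _ _; have [d [Q [Q_gt0 polya_dQ]]] := polya_gt_progression M k.
have le_dQ (K : int) : 0 <= K -> K <= K * Q by move=> K_ge0; rewrite ler_peMr.
have [le_Nd_absd le_d_absd] : - d <= `|d| /\ d <= `|d|.
  by split; [rewrite -normrN |]; apply: ler_norm.
split.
  exists (d + `|d| * Q) => i /[dup] /andP [le_1i _] /(polya_dQ `|d|) [nsq polya].
  split=> //; have := le_dQ `|d| (normr_ge0 d); move: le_1i; rewrite -lez_nat; lia.
pose K := - (`|d| + k%:Z + 1).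
exists (d + K * Q) => i /[dup] /andP [_ le_ik] /(polya_dQ K) [_ polya].
have : `|d| + k%:Z + 1 <= (`|d| + k%:Z + 1) * Q by apply: le_dQ; rewrite !addr_ge0.
by split=> //; move: le_ik; rewrite -lez_nat /K mulNr; lia.
Qed.
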